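(* Assume $n\ge 3$. Let $|\Psi^{\mathrm h}_0\rangle$ and $|\Psi^{\mathrm c}_0\rangle$ be initial states with $p^{\mathrm h}_0(0)>0$, $p^{\mathrm c}_0(0)>0$, and $D_I^{\mathrm h}(0)>D_I^{\mathrm c}(0)$. Define $r^{\mathrm h}=\frac{p^{\mathrm h}_1(0)}{p^{\mathrm h}_0(0)}$, $r^{\mathrm c}=\frac{p^{\mathrm c}_1(0)}{p^{\mathrm c}_0(0)}$, $s^{\mathrm h}=\frac{1-p^{\mathrm h}_0(0)}{p^{\mathrm h}_0(0)}$. If $r^{\mathrm h}<r^{\mathrm c}$ and $\epsilon>0$ satisfies $$\epsilon<\left(1+\frac{1}{r^{\mathrm c}}\left(\frac{s^{\mathrm h}-r^{\mathrm h}}{r^{\mathrm c}-r^{\mathrm h}}\right)^{\frac{E_1}{E_2-E_1}}\right)^{-1},$$ then the Mpemba effect with respect to $D_I$ occurs before the threshold $\epsilon$, i.e. there exists $\tau^\star>0$ such that $D_I^{\mathrm h}(\tau^\star)=D_I^{\mathrm c}(\tau^\star)>\epsilon$ and $D_I^{\mathrm h}(\tau)<D_I^{\mathrm c}(\tau)$ for all $\tau>\tau^\star$.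
   Context: Let $H$ be a Hamiltonian on an $n$-dimensional Hilbert space with nondegenerate eigenvalues $0=E_0<E_1<\dots<E_{n-1}$ and orthonormal eigenvectors $|E_0\rangle,\dots,|E_{n-1}\rangle$. For a pure initial state $|\Psi_0\rangle$ and real $\tau$, QITE is $|\Psi(\tau)\rangle=e^{-H\tau}|\Psi_0\rangle/\sqrt{\langle\Psi_0|e^{-2H\tau}|\Psi_0\rangle}$, with populations $p_i(\tau)=|\langle E_i|\Psi(\tau)\rangle|^2=p_i(0)e^{-2E_i\tau}/\sum_{j}p_j(0)e^{-2E_j\tau}$. The ground-state infidelity is $D_I(\tau)=1-p_0(\tau)$. Superscripts $\mathrm h$ and $\mathrm c$ denote quantities for the QITE trajectories starting from $|\Psi^{\mathrm h}_0\rangle$ and $|\Psi^{\mathrm c}_0\rangle$ respectively. *)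

From mathcomp Require Import all_boot all_order all_algebra.
From mathcomp Require Import all_classical all_reals all_analysis.
From mathcomp Require Import complex.
Set Implicit Arguments. Unset Strict Implicit. Unset Printing Implicit Defensive.
Import Order.TTheory GRing.Theory Num.Theory.
Local Open Scope ring_scope.

(* A pure state is given by its coordinates c k = <E_k|Psi_0> (k < n) in the
   orthonormal eigenbasis of H; coordinates with k >= n are irrelevant. *)

Definition pop0 (R : realType) (c : nat -> R[i]) (k : nat) : R :=
  (complex.Re (c k)) ^+ 2 + (complex.Im (c k)) ^+ 2.

Definition normalized (R : realType) (n : nat) (c : nat -> R[i]) : Prop :=
  \sum_(0 <= k < n) pop0 c k = 1.

Definition pop (R : realType) (n : nat) (E : nat -> R) (c : nat -> R[i])
  (tau : R) (k : nat) : R :=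
  pop0 c k * expR (- (2 * E k * tau)) /
  \sum_(0 <= j < n) pop0 c j * expR (- (2 * E j * tau)).

Definition DI (R : realType) (n : nat) (E : nat -> R) (c : nat -> R[i])
  (tau : R) : R := 1 - pop n E c tau 0.

From mathcomp Require Import all_boot all_order all_algebra.
From mathcomp Require Import all_classical all_reals all_analysis.
From mathcomp Require Import complex.
From mathcomp Require Import ring lra.
Import Order.TTheory GRing.Theory Num.Theory.
Import numFieldNormedType.Exports.
Local Open Scope classical_set_scope.
Local Open Scope ring_scope.

(* Write Q(t) = sum_(k >= 1) p_k(0) e^{-2 E_k t}, so that D_I = Q / (p_0(0) + Q) and
   D_I^h - D_I^c has the sign of the gap  d = p^c_0 Q^h - p^h_0 Q^c.  Keeping the
   first excited level exactly and bounding the higher ones by e^{-2 E_2 t} gives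
   d(t) <= e^{-2 E_1 t} (p^c_0 P^h_2 e^{-2 (E_2 - E_1) t} - K), where
   K = p^h_0 p^c_0 (r^c - r^h) > 0; hence d < 0 eventually, while d(0) > 0.  The
   Mpemba time is the last zero of d.  There the same bound forces
   e^{2 (E_2 - E_1) t} <= p^c_0 P^h_2 / K, i.e. a lower bound on e^{-2 E_1 t},
   and the first-level estimate Q^c >= p^c_1 e^{-2 E_1 t} turns it into the
   stated lower bound on D_I^c. *)

Lemma continuous_sum {R : realType} (I : Type) (s : seq I) (f : I -> R -> R) :
  (forall i, continuous (f i)) -> continuous (fun t => \sum_(i <- s) f i t).
Proof.
move=> fc; elim: s => [|i s IHs] x.
  under eq_fun do rewrite big_nil; exact: cst_continuous.
under eq_fun do rewrite big_cons.
by apply: cvgD; [exact: fc | exact: IHs].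
Qed.

Lemma last_root {R : realType} (f : R -> R) (a T : R) :
  continuous f -> 0 < f a -> (forall t, T <= t -> f t < 0) ->
  exists s, [/\ a < s, f s = 0 & forall t, s < t -> f t < 0].
Proof.
move=> fc fa_gt0 fT_lt0.
pose Z := [set t | a <= t /\ 0 <= f t].
have Za : Z a by split; last exact: ltW.
have ZT : ubound Z T.
  by move=> t [_ ft_ge0]; rewrite leNgt; apply/negP => /ltW/fT_lt0; rewrite ltNge ft_ge0.
have Zsup : has_sup Z by split; [exists a | exists T].
set s := sup Z.
have a_le_s : a <= s by exact: sup_upper_bound.
have after t : s < t -> f t < 0.
  move=> st; rewrite ltNge; apply/negP => ft_ge0.
  have : t <= s by apply: sup_upper_bound => //; split => //; lra.
  by rewrite leNgt st.
have fs_ge0 : 0 <= f s.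
  rewrite leNgt; apply/negP => fs_lt0.
  have /(_ _)/(@nbhs_ballP _ _ s)[del /= del0 fball] := cvgr_lt _ (fc s) _ fs_lt0.
  have [z Zz] := sup_adherent del0 Zsup; rewrite -/s => sz.
  have [_ fz_ge0] := Zz.
  have zs : z <= s by exact: sup_upper_bound.
  have : f z < 0.
    by apply: fball; rewrite -ball_normE /ball_ /= ger0_norm; lra.
  by rewrite ltNge fz_ge0.
have fs_le0 : f s <= 0.
  rewrite leNgt; apply/negP => fs_gt0.
  have /(_ _)/(@nbhs_ballP _ _ s)[del /= del0 fball] := cvgr_gt _ (fc s) _ fs_gt0.
  have : 0 < f (s + del / 2).
    by apply: fball; rewrite -ball_normE /ball_ /= ler0_norm; lra.
  by rewrite ltNge (ltW (after _ _)) //; lra.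
have fs0 : f s = 0 by apply/eqP; rewrite eq_le fs_le0 fs_ge0.
exists s; split => //.
by rewrite lt_neqAle a_le_s andbT; apply/eqP => a_eq_s; move: fa_gt0; rewrite a_eq_s fs0 ltxx.
Qed.

Lemma frac_addr_invE {R : fieldType} (a x : R) : x != 0 -> x / (a + x) = (1 + a / x)^-1.
Proof.
move=> x0; rewrite -[1 + _](@mulfK _ x) // mulrDl mul1r divfK // addrC.
by rewrite invf_div.
Qed.

Lemma frac_add_subE {R : fieldType} (a b x y : R) : a + x != 0 -> b + y != 0 ->
  x / (a + x) - y / (b + y) = (b * x - a * y) / ((a + x) * (b + y)).
Proof. by move=> ax0 by0; field; rewrite ax0 by0. Qed.

Section Populations.
Context {R : realType}.

Lemma pop0_ge0 (c : nat -> R[i]) (k : nat) : 0 <= pop0 c k.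
Proof. by rewrite /pop0 addr_ge0 // sqr_ge0. Qed.

Definition excited_weight (n : nat) (E : nat -> R) (c : nat -> R[i]) (t : R) : R :=
  \sum_(1 <= k < n) pop0 c k * expR (- (2 * E k * t)).

Context {n : nat} {E : nat -> R} {c : nat -> R[i]}.

Lemma excited_weight_ge0 t : 0 <= excited_weight n E c t.
Proof. by apply: sumr_ge0 => k _; rewrite mulr_ge0 ?pop0_ge0 ?expR_ge0. Qed.

Lemma continuous_excited_weight : continuous (excited_weight n E c).
Proof.
apply: continuous_sum => k x; apply: cvgM; first exact: cvg_cst.
apply: (@continuous_comp _ _ _ (fun t : R => - (2 * E k * t)) expR); last first.
  exact: continuous_expR.
by apply: cvgN; apply: cvgM; [exact: cvg_cst | exact: cvg_id].
Qed.

Lemma excited_weight_ge_first t :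
  (1 < n)%N -> pop0 c 1 * expR (- (2 * E 1%N * t)) <= excited_weight n E c t.
Proof.
move=> n_gt1; rewrite /excited_weight big_ltn //= lerDl.
by apply: sumr_ge0 => k _; rewrite mulr_ge0 ?pop0_ge0 ?expR_ge0.
Qed.

Lemma excited_weight_le_two_levels t :
  (2 < n)%N -> (forall j k, (j < k)%N -> (k < n)%N -> E j < E k) -> 0 <= t ->
  excited_weight n E c t <= pop0 c 1 * expR (- (2 * E 1%N * t)) +
     (\sum_(2 <= k < n) pop0 c k) * expR (- (2 * E 2%N * t)).
Proof.
move=> n_gt2 E_incr t_ge0.
rewrite /excited_weight big_ltn ?(ltn_trans _ n_gt2) // lerD2l mulr_suml.
apply: ler_sum_nat => k /andP[k_ge2 k_lt_n].
rewrite ler_wpM2l ?pop0_ge0 // ler_expR lerN2 ler_wpM2r // ler_wpM2l //.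
by move: k_ge2; rewrite leq_eqVlt => /orP[/eqP <- // | /E_incr/(_ k_lt_n)/ltW].
Qed.

Lemma normalized_excited_split : (1 < n)%N -> normalized n c ->
  1 - pop0 c 0 = pop0 c 1 + \sum_(2 <= k < n) pop0 c k.
Proof.
move=> n_gt1; rewrite /normalized big_ltn ?(ltn_trans _ n_gt1) // big_ltn // => <-.
by rewrite addrAC subrr add0r.
Qed.

Hypotheses (E0 : E 0%N = 0) (p0_gt0 : 0 < pop0 c 0).

Lemma DI_excited_weight t : (0 < n)%N ->
  DI n E c t = excited_weight n E c t / (pop0 c 0 + excited_weight n E c t).
Proof.
move=> n_gt0; rewrite /DI /pop big_ltn // E0 mulr0 mul0r oppr0 expR0 mulr1.
rewrite -/(excited_weight n E c t).
have := excited_weight_ge0 t; set Q := excited_weight n E c t => Q_ge0.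
by field; rewrite gt_eqF // (lt_le_trans p0_gt0) // lerDl.
Qed.

Lemma DI_ge_first_level t (W : R) : (1 < n)%N -> 0 < pop0 c 1 ->
  expR (2 * E 1%N * t) <= W -> (1 + pop0 c 0 / pop0 c 1 * W)^-1 <= DI n E c t.
Proof.
move=> n_gt1 p1_gt0 uW.
rewrite DI_excited_weight ?(ltnW n_gt1) //.
have Qfirst := excited_weight_ge_first t n_gt1.
set Q := excited_weight n E c t in Qfirst *.
set u := expR (- (2 * E 1%N * t)) in Qfirst.
have u_gt0 : 0 < u by exact: expR_gt0.
have W_gt0 : 0 < W by apply: lt_le_trans uW; exact: expR_gt0.
have uW1 : 1 <= W * u by rewrite /u expRN ler_pdivlMr ?expR_gt0 // mul1r.
have Q_gt0 : 0 < Q by apply: lt_le_trans Qfirst; exact: mulr_gt0.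
have WQ_ge1 : 1 <= W * Q / pop0 c 1 by rewrite ler_pdivlMr // mul1r; nra.
have add1_gt0 (x : R) : 0 < x -> 0 < 1 + x by move=> x_gt0; rewrite addr_gt0.
rewrite frac_addr_invE ?gt_eqF // lef_pV2 ?posrE ?add1_gt0 ?mulr_gt0 ?invr_gt0 //.
rewrite lerD2l ler_pdivrMr //.
have -> : pop0 c 0 / pop0 c 1 * W * Q = pop0 c 0 * (W * Q / pop0 c 1) by ring.
exact: ler_peMr (ltW p0_gt0) WQ_ge1.
Qed.

End Populations.

Lemma expR_decay_eventually_lt {R : realType} (a b K : R) : 0 <= a -> 0 < b -> 0 < K ->
  exists2 T, 0 <= T & forall t, T <= t -> a * expR (- (b * t)) < K.
Proof.
move=> a_ge0 b_gt0 K_gt0; have Kb_gt0 : 0 < K * b by exact: mulr_gt0.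
exists (a / (K * b)) => [|t Tt]; first exact: divr_ge0 (ltW _).
have t_ge0 : 0 <= t by apply: le_trans Tt; exact: divr_ge0 (ltW _).
have a_lt : a < K * (1 + b * t).
  by move: Tt; rewrite ler_pdivrMr // => Tt; nra.
rewrite expRN ltr_pdivrMr ?expR_gt0 //.
by apply: (lt_le_trans a_lt); rewrite ler_pM2l // expR_ge1Dx.
Qed.

Definition infidelity_gap {R : realType} (n : nat) (E : nat -> R) (ch cc : nat -> R[i])
    (t : R) : R :=
  pop0 cc 0 * excited_weight n E ch t - pop0 ch 0 * excited_weight n E cc t.

Section Crossing.
Context {R : realType} {n : nat} {E : nat -> R} {ch cc : nat -> R[i]}.
Hypotheses (n_ge3 : (3 <= n)%N) (E0 : E 0%N = 0)
  (E_incr : forall j k, (j < k)%N -> (k < n)%N -> E j < E k)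
  (ph0_gt0 : 0 < pop0 ch 0) (pc0_gt0 : 0 < pop0 cc 0).

Local Notation gap := (infidelity_gap n E ch cc).
Let n_gt1 : (1 < n)%N := leq_trans (isT : (1 < 3)%N) n_ge3.
Let P2h := \sum_(2 <= k < n) pop0 ch k.
Let P2h_ge0 : 0 <= P2h := sumr_ge0 _ (fun k _ => pop0_ge0 ch k).
Let K := pop0 cc 1 * pop0 ch 0 - pop0 ch 1 * pop0 cc 0.
Let rate := 2 * (E 2%N - E 1%N).

Lemma continuous_infidelity_gap : continuous gap.
Proof.
by move=> t; apply: cvgB; apply: cvgM; do ?exact: cvg_cst;
  exact: continuous_excited_weight.
Qed.

Lemma sgr_DI_sub t : Num.sg (DI n E ch t - DI n E cc t) = Num.sg (gap t).
Proof.
have denom_gt0 c : 0 < pop0 c 0 -> 0 < pop0 c 0 + excited_weight n E c t.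
  by move=> p0_gt0; apply: (lt_le_trans p0_gt0); rewrite lerDl excited_weight_ge0.
rewrite !DI_excited_weight ?(ltnW n_gt1) // frac_add_subE ?gt_eqF ?denom_gt0 //.
by rewrite sgrM sgrV (gtr0_sg (mulr_gt0 (denom_gt0 _ ph0_gt0) (denom_gt0 _ pc0_gt0))) mulr1.
Qed.

Lemma infidelity_gap_le t : 0 <= t ->
  gap t <= expR (- (2 * E 1%N * t)) * (pop0 cc 0 * P2h * expR (- (rate * t)) - K).
Proof.
move=> t_ge0.
have Qh_le := excited_weight_le_two_levels (c:=ch) t n_ge3 E_incr t_ge0.
have Qc_ge := excited_weight_ge_first (E:=E) (c:=cc) t n_gt1.
have split_exp : expR (- (2 * E 2%N * t)) = expR (- (2 * E 1%N * t)) * expR (- (rate * t)).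
  by rewrite -expRD /rate; congr expR; ring.
rewrite split_exp -/P2h in Qh_le; rewrite /infidelity_gap /K.
have := ler_wpM2l (ltW pc0_gt0) Qh_le; have := ler_wpM2l (ltW ph0_gt0) Qc_ge.
lra.
Qed.

Lemma K_gt0_of_ratio_lt : pop0 ch 1 / pop0 ch 0 < pop0 cc 1 / pop0 cc 0 -> 0 < K.
Proof. by rewrite ltr_pdivrMr // mulrAC ltr_pdivlMr // subr_gt0. Qed.

Hypothesis K_gt0 : 0 < K.

Lemma pop0_cc1_gt0 : 0 < pop0 cc 1.
Proof.
have : pop0 ch 1 * pop0 cc 0 < pop0 cc 1 * pop0 ch 0 by rewrite -subr_gt0.
by rewrite -(pmulr_lgt0 _ ph0_gt0); apply: le_lt_trans; rewrite mulr_ge0 ?pop0_ge0.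
Qed.

Lemma infidelity_gap_eventually_lt0 : exists T, forall t, T <= t -> gap t < 0.
Proof.
have rate_gt0 : 0 < rate by rewrite /rate pmulr_rgt0 // subr_gt0 E_incr.
have [|T T_ge0 decay] := expR_decay_eventually_lt (pop0 cc 0 * P2h) _ _ _ rate_gt0 K_gt0.
  by rewrite mulr_ge0 // ltW.
exists T => t Tt; apply: le_lt_trans (infidelity_gap_le _ (le_trans T_ge0 Tt)) _.
by rewrite pmulr_rlt0 ?expR_gt0 // subr_lt0 decay.
Qed.

Lemma excess_ratioE : normalized n ch ->
  ((1 - pop0 ch 0) / pop0 ch 0 - pop0 ch 1 / pop0 ch 0) /
    (pop0 cc 1 / pop0 cc 0 - pop0 ch 1 / pop0 ch 0) = pop0 cc 0 * P2h / K.
Proof.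
move=> normed_h; rewrite (normalized_excited_split n_gt1 normed_h) -/P2h.
have := K_gt0; rewrite /K => /gt_eqF K_neq0.
by field; rewrite K_neq0 !gt_eqF.
Qed.

(* At a zero of the gap, [infidelity_gap_le] gives [e^{rate s} <= p^c_0 P^h_2 / K],
   and [2 E_1 s = (E_1 / (E_2 - E_1)) (rate s)]. *)
Lemma crossing_time_bound s : 0 <= s -> gap s = 0 ->
  expR (2 * E 1%N * s) <= powR (pop0 cc 0 * P2h / K) (E 1%N / (E 2%N - E 1%N)).
Proof.
move=> s_ge0 gap_s.
have E12 : 0 < E 2%N - E 1%N by rewrite subr_gt0 E_incr.
have := infidelity_gap_le _ s_ge0; rewrite gap_s pmulr_rge0 ?expR_gt0 // subr_ge0.
rewrite expRN ler_pdivlMr ?expR_gt0 // -ler_pdivlMl // [X in _ <= X]mulrC => rate_le.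
have -> : 2 * E 1%N * s = rate * s * (E 1%N / (E 2%N - E 1%N)).
  by rewrite /rate; field; rewrite gt_eqF.
rewrite expRM ge0_ler_powR ?nnegrE ?expR_ge0 //.
- by rewrite divr_ge0 // ltW // -E0 E_incr.
- by rewrite divr_ge0 ?mulr_ge0 // ltW.
Qed.

End Crossing.

Theorem theorem2 (R : realType) (n : nat) (E : nat -> R)
  (ch cc : nat -> R[i]) (eps : R) :
  (3 <= n)%N ->
  E 0%N = 0 ->
  (forall j k : nat, (j < k)%N -> (k < n)%N -> E j < E k) ->
  normalized n ch -> normalized n cc ->
  0 < pop0 ch 0 -> 0 < pop0 cc 0 ->
  DI n E ch 0 > DI n E cc 0 ->
  let rh := pop0 ch 1 / pop0 ch 0 in
  let rc := pop0 cc 1 / pop0 cc 0 in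
  let sh := (1 - pop0 ch 0) / pop0 ch 0 in
  rh < rc ->
  0 < eps ->
  eps < (1 + rc^-1 * powR ((sh - rh) / (rc - rh)) (E 1%N / (E 2%N - E 1%N)))^-1 ->
  exists taus : R, 0 < taus /\
    DI n E ch taus = DI n E cc taus /\ DI n E cc taus > eps /\
    (forall tau : R, taus < tau -> DI n E ch tau < DI n E cc tau).
Proof.
move=> n_ge3 E0 E_incr normed_h _ ph0_gt0 pc0_gt0 DI0 rh rc sh rh_lt_rc _ eps_lt.
have K_gt0 := K_gt0_of_ratio_lt ph0_gt0 pc0_gt0 rh_lt_rc.
have sgr_DI := sgr_DI_sub n_ge3 E0 ph0_gt0 pc0_gt0.
have gap0_gt0 : 0 < infidelity_gap n E ch cc 0.
  by rewrite -sgr_cp0 -sgr_DI sgr_cp0 subr_gt0.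
have [T gapT] := infidelity_gap_eventually_lt0 n_ge3 E_incr ph0_gt0 pc0_gt0 K_gt0.
have [s [s_gt0 gap_s after]] := last_root _ _ _ continuous_infidelity_gap gap0_gt0 gapT.
exists s; split => //; split; last split.
- by apply/eqP; rewrite -subr_eq0 -sgr_eq0 sgr_DI gap_s sgr0.
- apply: lt_le_trans eps_lt _.
  rewrite /rc invf_div /sh /rh (excess_ratioE n_ge3 ph0_gt0 pc0_gt0 K_gt0 normed_h).
  apply: (DI_ge_first_level E0 pc0_gt0); first exact: ltnW.
  - exact: pop0_cc1_gt0 ph0_gt0 K_gt0.
  - exact: crossing_time_bound n_ge3 E0 E_incr ph0_gt0 pc0_gt0 K_gt0 _ (ltW s_gt0) gap_s.
- by move=> t st; rewrite -subr_lt0 -sgr_cp0 sgr_DI sgr_cp0 after.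
Qed.
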